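(* Let $(Q,\cdot)$ be a groupoid of order $n$ with elements ordered as $q_1,\dots,q_n$, which is $k$-translatable with respect to this ordering ($1\le k<n$) and contains a cancellable element. Then $Q$ is a quasigroup if and only if $\gcd(k,n)=1$.
   Context: An element $c$ is cancellable if $cx=cy\Rightarrow x=y$ and $xc=yc\Rightarrow x=y$. A finite groupoid with ordering $q_1,\dots,q_n$ is $k$-translatable with respect to this ordering if $q_i\cdot q_j=q_{i-1}\cdot q_{j-k}$ for all $i\in\{2,\dots,n\}$, $j\in\{1,\dots,n\}$, indices taken modulo $n$ in $\{1,\dots,n\}$. *)

From mathcomp Require Import all_boot.
Set Implicit Arguments. Unset Strict Implicit. Unset Printing Implicit Defensive.

(* Indices are 0-based: the paper's q_1..q_n are q 0 .. q (n-1), q : 'I_n -> T. *)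

Lemma ord_pos n (i : 'I_n) : 0 < n.
Proof. by case: i => m; case: n => // /ltnW. Qed.

(* ord_sub i k = the index (i - k) mod n, as an element of 'I_n *)
Definition ord_sub n (i : 'I_n) (k : nat) : 'I_n :=
  Ordinal (ltn_pmod (i + (n - k %% n)) (ord_pos i)).

Definition cancellable (T : Type) (op : T -> T -> T) (c : T) : Prop :=
  (forall x y, op c x = op c y -> x = y) /\ (forall x y, op x c = op y c -> x = y).

Definition quasigroup (T : Type) (op : T -> T -> T) : Prop :=
  forall a b : T, (exists! x, op a x = b) /\ (exists! y, op y a = b).

(* k-translatable w.r.t. the ordering q : q_i q_j = q_{i-1} q_{j-k}
   for paper indices i in {2..n}, i.e. 0-based i >= 1, j arbitrary *)
Definition k_translatable (T : Type) (op : T -> T -> T) (n : nat)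
    (q : 'I_n -> T) (k : nat) : Prop :=
  forall i j : 'I_n, 0 < (i : nat) ->
    op (q i) (q j) = op (q (ord_sub i 1)) (q (ord_sub j k)).

From mathcomp Require Import all_boot ssralg finalg zmodp.

Set Implicit Arguments.
Unset Strict Implicit.
Unset Printing Implicit Defensive.

Import GRing.Theory.

(* Read the indices in Z/nZ.  Iterating translatability gives q_i q_j = q_0 q_(j - ik).
   Left cancellability of c = q_a makes j |-> q_0 q_j injective, since
   q_a q_j = q_0 q_(j - ak); so q_i q_j determines j - ik.  Right cancellability of c
   then makes i |-> ik injective, i.e. k is a unit mod n, i.e. gcd(k, n) = 1.  Together
   these make every left and right translation injective, hence bijective on the
   finite carrier: a cancellable element forces both sides of the equivalence. *)

Lemma finite_quasigroup (T : finType) (op : T -> T -> T) :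
  (forall a, injective (op a)) -> (forall a, injective (op^~ a)) -> quasigroup op.
Proof.
move=> linj rinj a b; split.
- have [f fK Kf] := injF_bij (linj a).
  by exists (f b); split=> [|x <-]; rewrite ?Kf ?fK.
- have [f fK Kf] := injF_bij (rinj a).
  by exists (f b); split=> [|x <-]; rewrite /= ?Kf ?fK.
Qed.

Local Open Scope ring_scope.

Lemma unit_of_mulr_inj (R : finComUnitRingType) (x : R) :
  injective ( *%R^~ x) -> x \is a GRing.unit.
Proof.
move=> mulx_inj; have [y _ yK] := injF_bij mulx_inj.
by apply/unitrP; exists (y 1); rewrite [x * _]mulrC yK.
Qed.

Lemma ord_subE n' (i : 'I_n'.+2) m : ord_sub i m = i - m%:R.
Proof. by apply: val_inj; rewrite /= Zp_nat /= modnDmr. Qed.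

Section TranslatableGroupoid.

Variables (T : finType) (op : T -> T -> T) (n' k : nat) (q : 'I_n'.+2 -> T).
Local Notation n := n'.+2.
Hypotheses (q_bij : bijective q) (translatable : k_translatable op q k).

Let q_inj : injective q := bij_inj q_bij.

Lemma translatable_mulE i j : op (q i) (q j) = op (q 0) (q (j - i * k%:R)).
Proof.
suff mulE m : (m < n)%N -> op (q m%:R) (q j) = op (q 0) (q (j - m%:R * k%:R)).
  by rewrite -(natr_Zp i) mulE.
elim: m j => [|m IHm] j lt_m_n; first by rewrite mul0r subr0.
have val_m1 : (m.+1%:R : 'I_n) = m.+1 :> nat by rewrite Zp_nat /= modn_small.
rewrite translatable; last by rewrite val_m1.
rewrite !ord_subE mulrSr addrK IHm ?(ltnW lt_m_n) //.
by rewrite mulrDl mul1r opprD addrAC addrA.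
Qed.

Variable a : 'I_n.
Hypothesis a_cancel : cancellable op (q a).

Lemma mul_q0_inj : injective (fun j => op (q 0) (q j)).
Proof.
have shiftE j : op (q a) (q (j + a * k%:R)) = op (q 0) (q j).
  by rewrite translatable_mulE addrK.
move=> x y /= eq_xy; apply: (addIr (a * k%:R)); apply: q_inj.
by apply: a_cancel.1; rewrite !shiftE.
Qed.

Lemma translatable_mul_eq i j i' j' :
  op (q i) (q j) = op (q i') (q j') <-> j - i * k%:R = j' - i' * k%:R.
Proof.
by rewrite (translatable_mulE i) (translatable_mulE i'); split=> [/mul_q0_inj | ->].
Qed.

Lemma mulk_inj : injective ( *%R^~ (k%:R : 'I_n)).
Proof.
move=> i i' /= eq_ik; apply: q_inj; apply: a_cancel.2.
by apply/translatable_mul_eq; rewrite eq_ik.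
Qed.

Lemma translatable_coprime : coprime n k.
Proof. by rewrite -unitZpE //; apply: unit_of_mulr_inj mulk_inj. Qed.

Lemma translatable_quasigroup : quasigroup op.
Proof.
have [qi _ qiK] := q_bij.
apply: finite_quasigroup => b x y; rewrite -(qiK b) -(qiK x) -(qiK y).
- by move/translatable_mul_eq/addIr->.
- by move/translatable_mul_eq/addrI/oppr_inj/mulk_inj->.
Qed.

End TranslatableGroupoid.

Local Close Scope ring_scope.

Theorem proposition8p8 (T : finType) (op : T -> T -> T) (n k : nat)
    (q : 'I_n -> T) :
  bijective q -> #|T| = n ->
  1 <= k < n ->
  k_translatable op q k ->
  (exists c : T, cancellable op c) ->
  (quasigroup op <-> gcdn k n = 1).
Proof.
move=> q_bij _ /andP[k_gt0 lt_k_n] translatable [c c_cancel].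
have [n' def_n] : exists n', n = n'.+2.
  by exists n.-2; rewrite -subn2 -addn2 subnK // (leq_ltn_trans k_gt0 lt_k_n).
subst n; have [qi _ qiK] := q_bij; rewrite -(qiK c) in c_cancel.
split=> _.
- by apply/eqP; rewrite gcdnC; apply: (translatable_coprime q_bij translatable c_cancel).
- by apply: (translatable_quasigroup q_bij translatable c_cancel).
Qed.
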